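(* Let $c$ be a closure operator on $\mathcal A$. If $c$ is idempotent, i.e. $c_A(c_A(m))=c_A(m)$ for all $A\in\mathcal A$ and $m\in\operatorname{sub}_{\mathcal A}A$, then $c^\rho$ is idempotent, i.e. $c^\rho_X(c^\rho_X(m))=c^\rho_X(m)$ for all $X\in\mathcal X$ and $m\in\operatorname{sub}X$.
   Context: Standing setting. $\mathcal X$ and $\mathcal A$ are finitely complete categories; $\mathcal X$ carries a proper factorization system $(\mathcal E,\mathcal M)$ and $\mathcal A$ a proper factorization system $(\mathcal F,\mathcal N)$ (proper: every member of $\mathcal E$, resp. $\mathcal F$, is an epimorphism and every member of $\mathcal M$, resp. $\mathcal N$, is a monomorphism). $\mathcal A$ is a full reflective subcategory of $\mathcal X$ with reflector $R:\mathcal X\to\mathcal A$ and reflection (unit) $\rho_X:X\to RX$; as in the paper's setting, $\mathcal N\subseteq\mathcal M$ and $R\mathcal E\subseteq\mathcal F$. For $X\in\mathcal X$, $\operatorname{sub}X$ is the class $\mathcal M/X$ of $\mathcal M$-morphisms with codomain $X$, preordered by $m\le n$ iff $m=nj$ for some morphism $j$; for $A\in\mathcal A$, $\operatorname{sub}_{\mathcal A}A=\mathcal N/A$ with the same preorder. For $f:X\to Y$ and $m\in\operatorname{sub}X$, the image $f(m)\in\operatorname{sub}Y$ is the $\mathcal M$-part of the $(\mathcal E,\mathcal M)$-factorization of $fm$, and for $n\in\operatorname{sub}Y$ the preimage $f^{-1}(n)\in\operatorname{sub}X$ is the pullback of $n$ along $f$ (analogously in $\mathcal A$ using $(\mathcal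 F,\mathcal N)$). A closure operator $c$ on $\mathcal A$ (with respect to $\mathcal N$) is a family of maps $c_A:\operatorname{sub}_{\mathcal A}A\to\operatorname{sub}_{\mathcal A}A$ ($A\in\mathcal A$) such that $m\le c_A(m)$, $m\le n\Rightarrow c_A(m)\le c_A(n)$, and $f(c_A(m))\le c_B(f(m))$ for every morphism $f:A\to B$ of $\mathcal A$; closure operators on $\mathcal X$ (with respect to $\mathcal M$) are defined likewise. For an arbitrary morphism $g:M\to A$ of $\mathcal A$, write $g(1_M)$ for the $\mathcal N$-part of its $(\mathcal F,\mathcal N)$-factorization and put $c_A(g):=c_A(g(1_M))$. The $R$-initial lift of $c$ is the closure operator $c^\rho$ on $\mathcal X$ given by $c^\rho_X(m)=\rho_X^{-1}(c_{RX}(Rm))$ for $X\in\mathcal X$, $m\in\operatorname{sub}X$. *)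

Set Implicit Arguments.
Unset Strict Implicit.

Record Category := {
  Obj :> Type;
  Hom : Obj -> Obj -> Type;
  idm : forall x, Hom x x;
  comp : forall x y z, Hom y z -> Hom x y -> Hom x z;
  comp_id_l : forall x y (f : Hom x y), comp (idm y) f = f;
  comp_id_r : forall x y (f : Hom x y), comp f (idm x) = f;
  comp_assoc : forall w x y z (h : Hom y z) (g : Hom x y) (f : Hom w x),
      comp h (comp g f) = comp (comp h g) f }.

Arguments Hom {c} x y.
Arguments idm {c} x.
Arguments comp {c x y z} g f.
Infix "∘" := comp (at level 40, left associativity).

Definition is_iso (C : Category) (x y : C) (f : Hom x y) : Prop :=
  exists g : Hom y x, g ∘ f = idm x /\ f ∘ g = idm y.
Definition is_epi (C : Category) (x y : C) (f : Hom x y) : Prop :=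
  forall z (g h : Hom y z), g ∘ f = h ∘ f -> g = h.
Definition is_mono (C : Category) (x y : C) (f : Hom x y) : Prop :=
  forall z (g h : Hom z x), f ∘ g = f ∘ h -> g = h.

Definition MorClass (C : Category) := forall x y : C, Hom x y -> Prop.

Definition is_pullback (C : Category) (x y z p : C) (f : Hom x z) (g : Hom y z)
  (p1 : Hom p x) (p2 : Hom p y) : Prop :=
  f ∘ p1 = g ∘ p2 /\
  forall q (q1 : Hom q x) (q2 : Hom q y), f ∘ q1 = g ∘ q2 ->
    exists! u : Hom q p, p1 ∘ u = q1 /\ p2 ∘ u = q2.

Record FinitelyComplete (C : Category) := {
  term : C;
  term_mor : forall x : C, Hom x term;
  term_uniq : forall (x : C) (f g : Hom x term), f = g;
  pb_obj : forall x y z : C, Hom x z -> Hom y z -> C;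
  pb_p1 : forall (x y z : C) (f : Hom x z) (g : Hom y z), Hom (pb_obj f g) x;
  pb_p2 : forall (x y z : C) (f : Hom x z) (g : Hom y z), Hom (pb_obj f g) y;
  pb_is : forall (x y z : C) (f : Hom x z) (g : Hom y z),
      is_pullback f g (pb_p1 f g) (pb_p2 f g) }.

Record ProperFactSys (C : Category) := {
  fE : MorClass C;
  fM : MorClass C;
  fE_iso : forall (x y : C) (f : Hom x y), is_iso f -> fE f;
  fM_iso : forall (x y : C) (f : Hom x y), is_iso f -> fM f;
  fE_isoL : forall (x y z : C) (h : Hom y z) (f : Hom x y), is_iso h -> fE f -> fE (h ∘ f);
  fE_isoR : forall (x y z : C) (f : Hom y z) (h : Hom x y), is_iso h -> fE f -> fE (f ∘ h);
  fM_isoL : forall (x y z : C) (h : Hom y z) (f : Hom x y), is_iso h -> fM f -> fM (h ∘ f);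
  fM_isoR : forall (x y z : C) (f : Hom y z) (h : Hom x y), is_iso h -> fM f -> fM (f ∘ h);
  fact_obj : forall (x y : C), Hom x y -> C;
  fact_e : forall (x y : C) (f : Hom x y), Hom x (fact_obj f);
  fact_m : forall (x y : C) (f : Hom x y), Hom (fact_obj f) y;
  fact_eE : forall (x y : C) (f : Hom x y), fE (fact_e f);
  fact_mM : forall (x y : C) (f : Hom x y), fM (fact_m f);
  fact_eq : forall (x y : C) (f : Hom x y), fact_m f ∘ fact_e f = f;
  fs_diag : forall (a b c d : C) (e : Hom a b) (m : Hom c d) (u : Hom a c) (v : Hom b d),
      fE e -> fM m -> m ∘ u = v ∘ e ->
      exists! w : Hom b c, w ∘ e = u /\ m ∘ w = v;
  fE_epi : forall (x y : C) (f : Hom x y), fE f -> is_epi f;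
  fM_mono : forall (x y : C) (f : Hom x y), fM f -> is_mono f;
  (* M is stable under pullback (a consequence of the axioms above) *)
  fM_pb : forall (x y z p : C) (f : Hom x z) (g : Hom y z) (p1 : Hom p x) (p2 : Hom p y),
      is_pullback f g p1 p2 -> fM g -> fM p1 }.

Arguments fE {C} p0 {x y} f.
Arguments fM {C} p0 {x y} f.

Record sub (C : Category) (FS : ProperFactSys C) (x : C) := {
  sdom : C;
  smor : Hom sdom x;
  sM : fM FS smor }.
Arguments sdom {C FS x} s.
Arguments smor {C FS x} s.
Arguments sM {C FS x} s.

Definition sub_le (C : Category) (FS : ProperFactSys C) (x : C) (m n : sub FS x) : Prop :=
  exists j : Hom (sdom m) (sdom n), smor m = smor n ∘ j.

Definition sub_eqv (C : Category) (FS : ProperFactSys C) (x : C) (m n : sub FS x) : Prop :=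
  sub_le m n /\ sub_le n m.

Definition mpart (C : Category) (FS : ProperFactSys C) (a x : C) (g : Hom a x) : sub FS x :=
  {| sdom := fact_obj FS g; smor := fact_m FS g; sM := fact_mM FS g |}.

Definition image (C : Category) (FS : ProperFactSys C) (x y : C) (f : Hom x y)
  (m : sub FS x) : sub FS y := mpart FS (f ∘ smor m).

Definition preimage (C : Category) (L : FinitelyComplete C) (FS : ProperFactSys C)
  (x y : C) (f : Hom x y) (n : sub FS y) : sub FS x :=
  {| sdom := pb_obj L f (smor n);
     smor := pb_p1 L f (smor n);
     sM := @fM_pb C FS _ _ _ _ _ _ _ _ (pb_is L f (smor n)) (sM n) |}.

Record ClosureOp (C : Category) (FS : ProperFactSys C) := {
  cl : forall x : C, sub FS x -> sub FS x;
  cl_ext : forall (x : C) (m : sub FS x), sub_le m (cl m);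
  cl_mono : forall (x : C) (m n : sub FS x), sub_le m n -> sub_le (cl m) (cl n);
  cl_cont : forall (x y : C) (f : Hom x y) (m : sub FS x),
      sub_le (image f (cl m)) (cl (image f m)) }.
Arguments cl {C FS} c x m.

Definition idempotent_family (C : Category) (FS : ProperFactSys C)
  (F : forall x : C, sub FS x -> sub FS x) : Prop :=
  forall (x : C) (m : sub FS x), sub_eqv (F x (F x m)) (F x m).

Definition idempotent (C : Category) (FS : ProperFactSys C) (c : ClosureOp FS) : Prop :=
  idempotent_family (cl c).

Definition FullSub (C : Category) (P : C -> Prop) : Category.
Proof.
  refine {| Obj := {x : C | P x};
            Hom := fun a b => Hom (proj1_sig a) (proj1_sig b);
            idm := fun a => idm (proj1_sig a);
            comp := fun a b c g f => g ∘ f |}.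
  - intros; apply comp_id_l.
  - intros; apply comp_id_r.
  - intros; apply comp_assoc.
Defined.

Arguments FullSub : clear implicits.

Record Reflection (C : Category) (P : C -> Prop) := {
  refl_obj : C -> FullSub C P;
  refl_unit : forall x : C, Hom x (proj1_sig (refl_obj x));
  refl_ext : forall (x : C) (a : FullSub C P),
      Hom x (proj1_sig a) -> Hom (proj1_sig (refl_obj x)) (proj1_sig a);
  refl_ext_comm : forall (x : C) (a : FullSub C P) (f : Hom x (proj1_sig a)),
      refl_ext f ∘ refl_unit x = f;
  refl_ext_uniq : forall (x : C) (a : FullSub C P) (f : Hom x (proj1_sig a))
      (g : Hom (proj1_sig (refl_obj x)) (proj1_sig a)),
      g ∘ refl_unit x = f -> g = refl_ext f }.

Arguments Reflection : clear implicits.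

Definition refl_map (C : Category) (P : C -> Prop) (R : Reflection C P) (x y : C)
  (f : Hom x y) : @Hom (FullSub C P) (refl_obj R x) (refl_obj R y) :=
  @refl_ext C P R x (refl_obj R y) (refl_unit R y ∘ f).

Definition N_sub_M (C : Category) (P : C -> Prop) (FX : ProperFactSys C)
  (FA : ProperFactSys (FullSub C P)) : Prop :=
  forall (a b : FullSub C P) (f : @Hom (FullSub C P) a b), fM FA f -> @fM C FX _ _ f.

Definition RE_sub_F (C : Category) (P : C -> Prop) (FX : ProperFactSys C)
  (FA : ProperFactSys (FullSub C P)) (R : Reflection C P) : Prop :=
  forall (x y : C) (f : Hom x y), fE FX f -> fE FA (refl_map R f).

Definition sub_incl (C : Category) (P : C -> Prop) (FX : ProperFactSys C)
  (FA : ProperFactSys (FullSub C P)) (NM : N_sub_M FX FA) (a : FullSub C P)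
  (n : sub FA a) : sub FX (proj1_sig a) :=
  {| sdom := proj1_sig (sdom n); smor := smor n; sM := NM _ _ (smor n) (sM n) |}.

(* the R-initial lift c^ρ_X(m) = ρ_X^{-1}(c_{RX}(Rm)) *)
Definition crho (C : Category) (P : C -> Prop) (LX : FinitelyComplete C)
  (FX : ProperFactSys C) (FA : ProperFactSys (FullSub C P)) (R : Reflection C P)
  (NM : N_sub_M FX FA) (c : ClosureOp FA) (x : C) (m : sub FX x) : sub FX x :=
  preimage LX (refl_unit R x)
    (sub_incl NM (cl c (refl_obj R x) (mpart FA (refl_map R (smor m))))).


(* The R-initial lift is the composite of the Galois connection
   [Rm <= n  <->  m <= ρ_X^{-1}(n)] (between sub X and sub_A RX) with c.
   Extensiveness of c^ρ is the unit of this connection followed by c; for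
   idempotence, c^ρ_X m = ρ^{-1}(k) with k = c(Rm) gives R(c^ρ_X m) <= k by the
   counit, hence c(R(c^ρ_X m)) <= c k = k and c^ρ_X(c^ρ_X m) <= ρ^{-1}(k). *)

Lemma sub_le_refl (C : Category) (FS : ProperFactSys C) (x : C) (m : sub FS x) :
  sub_le m m.
Proof. exists (idm _). symmetry; apply comp_id_r. Qed.

Lemma sub_le_trans (C : Category) (FS : ProperFactSys C) (x : C) (m n p : sub FS x) :
  sub_le m n -> sub_le n p -> sub_le m p.
Proof.
  intros [j Hj] [k Hk]. exists (k ∘ j). rewrite Hj, Hk. symmetry; apply comp_assoc.
Qed.

Lemma mpart_le (C : Category) (FS : ProperFactSys C) (a x : C) (g : Hom a x)
  (n : sub FS x) (w : Hom a (sdom n)) : g = smor n ∘ w -> sub_le (mpart FS g) n.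
Proof.
  intros Hg.
  destruct (fs_diag (fact_eE FS g) (sM n) (u := w) (v := fact_m FS g))
    as [d [[_ Hd] _]].
  - rewrite fact_eq. symmetry; exact Hg.
  - exists d. symmetry; exact Hd.
Qed.

Lemma sub_le_preimage (C : Category) (L : FinitelyComplete C) (FS : ProperFactSys C)
  (x y : C) (f : Hom x y) (m : sub FS x) (n : sub FS y) (v : Hom (sdom m) (sdom n)) :
  f ∘ smor m = smor n ∘ v -> sub_le m (preimage L f n).
Proof.
  intros H. destruct (pb_is L f (smor n)) as [_ U].
  destruct (U _ _ _ H) as [u [[H1 _] _]].
  exists u. symmetry; exact H1.
Qed.

Lemma preimage_square (C : Category) (L : FinitelyComplete C) (FS : ProperFactSys C)
  (x y : C) (f : Hom x y) (n : sub FS y) :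
  f ∘ smor (preimage L f n) = smor n ∘ pb_p2 L f (smor n).
Proof. apply (pb_is L f (smor n)). Qed.

Lemma preimage_mono (C : Category) (L : FinitelyComplete C) (FS : ProperFactSys C)
  (x y : C) (f : Hom x y) (n1 n2 : sub FS y) :
  sub_le n1 n2 -> sub_le (preimage L f n1) (preimage L f n2).
Proof.
  intros [j Hj]. apply sub_le_preimage with (v := j ∘ pb_p2 L f (smor n1)).
  rewrite comp_assoc, <- Hj. apply preimage_square.
Qed.

Section ReflectiveLift.

Variables (X : Category) (P : X -> Prop) (LX : FinitelyComplete X).
Variables (FX : ProperFactSys X) (FA : ProperFactSys (FullSub X P)).
Variables (R : Reflection X P) (NM : N_sub_M FX FA).

Lemma refl_unit_cancel (x : X) (a : FullSub X P)
  (g h : Hom (proj1_sig (refl_obj R x)) (proj1_sig a)) :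
  g ∘ refl_unit R x = h ∘ refl_unit R x -> g = h.
Proof.
  intros E. rewrite (refl_ext_uniq E). symmetry. now apply refl_ext_uniq.
Qed.

Lemma refl_map_natural (x y : X) (f : Hom x y) :
  @comp X _ _ _ (refl_map R f) (refl_unit R x) = refl_unit R y ∘ f.
Proof. apply refl_ext_comm. Qed.

Lemma sub_incl_le (a : FullSub X P) (n1 n2 : sub FA a) :
  sub_le n1 n2 -> sub_le (sub_incl NM n1) (sub_incl NM n2).
Proof. exact (fun H => H). Qed.

Lemma sub_le_preimage_refl (x : X) (m : sub FX x) :
  sub_le m (preimage LX (refl_unit R x)
              (sub_incl NM (mpart FA (refl_map R (smor m))))).
Proof.
  set (g := refl_map R (smor m)).
  apply sub_le_preimage
    with (v := @comp X _ _ _ (fact_e FA g) (refl_unit R (sdom m))).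
  simpl. rewrite <- refl_map_natural, comp_assoc. fold g.
  f_equal. symmetry. exact (fact_eq FA g).
Qed.

Lemma mpart_refl_map_le (x : X) (m : sub FX x) (n : sub FA (refl_obj R x)) :
  sub_le m (preimage LX (refl_unit R x) (sub_incl NM n)) ->
  sub_le (mpart FA (refl_map R (smor m))) n.
Proof.
  intros [j Hj].
  set (v := @comp X _ _ _ (pb_p2 LX (refl_unit R x) (smor n)) j).
  apply mpart_le with (w := refl_ext R (a := sdom n) v).
  apply refl_unit_cancel; simpl.
  rewrite refl_map_natural, <- comp_assoc, refl_ext_comm, Hj, comp_assoc.
  unfold v; rewrite comp_assoc. f_equal. apply preimage_square.
Qed.

Variable c : ClosureOp FA.

Lemma crho_ext (x : X) (m : sub FX x) : sub_le m (crho LX R NM c m).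
Proof.
  eapply sub_le_trans; [apply sub_le_preimage_refl |].
  apply preimage_mono, sub_incl_le, cl_ext.
Qed.

Lemma crho_le_preimage (x : X) (m : sub FX x) (n : sub FA (refl_obj R x)) :
  sub_le m (preimage LX (refl_unit R x) (sub_incl NM n)) ->
  sub_le (crho LX R NM c m) (preimage LX (refl_unit R x) (sub_incl NM (cl c _ n))).
Proof.
  intros H. apply preimage_mono, sub_incl_le, cl_mono, mpart_refl_map_le, H.
Qed.

End ReflectiveLift.

Theorem proposition2p3 (X : Category) (P : X -> Prop)
  (LX : FinitelyComplete X) (LA : FinitelyComplete (FullSub X P))
  (FX : ProperFactSys X) (FA : ProperFactSys (FullSub X P))
  (R : Reflection X P) (NM : N_sub_M FX FA) (REF : RE_sub_F FX FA R)
  (c : ClosureOp FA) :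
  idempotent c -> idempotent_family (crho LX R NM c).
Proof.
  intros Hidem x m. split; [| apply crho_ext].
  set (k := cl c (refl_obj R x) (mpart FA (refl_map R (smor m)))).
  eapply sub_le_trans.
  - apply crho_le_preimage with (n := k), sub_le_refl.
  - apply preimage_mono, sub_incl_le, Hidem.
Qed.
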